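(* Let $(N,+,* )$ be a planar nearring presented by $(\Phi,R,M)$. Then: (1) If $D(N)\ne\{0\}$ and every element of $D(N)$ is a zero multiplier, then $GC(N)$ equals the set of zero multipliers, which is an ideal of $N$. (2) If $D(N)$ meets at least two distinct nonzero $\Phi$-orbits and at least one element of $D(N)$ is not a zero multiplier, then $GC(N)=\{0\}$. (3) If $D(N)\setminus\{0\}$ is contained in a single $\Phi$-orbit $r\Phi$ with $r\in R\setminus M$ and $D(N)\ne\{0\}$, then $rZ(\Phi)\cup\{0\}\subseteq GC(N)\subseteq r\Phi\cup\{0\}$. (4) If $D(N)=\{0\}$, then $GC(N)=N$.
   Context: A (right) nearring $(N,+,* )$ is a set with a group $(N,+)$, a semigroup $(N,* )$, and right distributivity $(a+b)*c=a*c+b*c$. $N$ is planar if the relation $a\cong b$ ($x*a=x*b$ for all $x$) has at least $3$ classes and for all $a,b,c$ with $a\not\cong b$ the equation $x*a=x*b+c$ has a unique solution. An ideal is a normal additive subgroup $I$ with $i*n\in I$ and $n*m-n*(m+i)\in I$ for all $i\in I$, $n,m\in N$. Every planar nearring arises as follows, and we always consider it so presented. $\Phi\le \mathrm{Aut}(N,+)$ acts on the right, is fixed point free, and $n\mapsto -n+n\phi$ is bijective for each $\phi\ne\mathrm{id}$. $R$ is a set of representatives of the $\Phi$-orbits of $N\setminus\{0\}$ and $M\subseteq R$. Each $a\ne0$ is uniquely $a=r_a\phi_a$, $r_a\in R$, $\phi_a\in\Phi$. Multiplication: $a*b=0$ if $b=0$ or $r_b\in M$, else $a*b=a\phi_b$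 (and $0*b=0$). The zero multipliers are the elements of $M\Phi\cup\{0\}$, i.e. those $n$ with $x*n=0$ for all $x$. $D(N)=\{n: n*(a+b)=n*a+n*b\ \forall a,b\}$. The generalized centre is $GC(N)=\{n\in N: n*d=d*n \text{ for all } d\in D(N)\}$. $Z(\Phi)$ is the centre of $\Phi$. *)

Set Implicit Arguments.

Section Defs.
Variables (N : Type) (add : N -> N -> N) (zero : N) (opp : N -> N)
          (mul : N -> N -> N).

Definition is_group : Prop :=
  (forall a b c, add a (add b c) = add (add a b) c) /\
  (forall a, add zero a = a) /\ (forall a, add a zero = a) /\
  (forall a, add (opp a) a = zero) /\ (forall a, add a (opp a) = zero).

Definition is_nearring : Prop :=
  is_group /\
  (forall a b c, mul a (mul b c) = mul (mul a b) c) /\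
  (forall a b c, mul (add a b) c = add (mul a c) (mul b c)).

Definition nr_equiv (a b : N) : Prop := forall x, mul x a = mul x b.

Definition is_planar : Prop :=
  is_nearring /\
  (exists a b c, ~ nr_equiv a b /\ ~ nr_equiv a c /\ ~ nr_equiv b c) /\
  (forall a b c, ~ nr_equiv a b ->
     exists x, mul x a = add (mul x b) c /\
       forall y, mul y a = add (mul y b) c -> y = x).

Definition distr_elt (n : N) : Prop :=
  forall a b, mul n (add a b) = add (mul n a) (mul n b).

Definition gen_centre (n : N) : Prop :=
  forall d, distr_elt d -> mul n d = mul d n.

Definition zero_mult (n : N) : Prop := forall x, mul x n = zero.

Definition is_ideal (I : N -> Prop) : Prop :=
  I zero /\
  (forall i j, I i -> I j -> I (add i j)) /\
  (forall i, I i -> I (opp i)) /\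
  (forall n i, I i -> I (add (add n i) (opp n))) /\
  (forall i n, I i -> I (mul i n)) /\
  (forall n m i, I i -> I (add (mul n m) (opp (mul n (add m i))))).

(* Presentation (Phi, R, M) of the multiplication.  Phi is a set of
   functions N -> N acting on the right (n phi := phi n). *)
Definition is_presentation (Phi : (N -> N) -> Prop) (R M : N -> Prop) : Prop :=
  (forall f, Phi f -> forall a b, f (add a b) = add (f a) (f b)) /\
  Phi (fun x => x) /\
  (forall f g, Phi f -> Phi g -> Phi (fun x => g (f x))) /\
  (forall f, Phi f -> exists g, Phi g /\ (forall x, g (f x) = x) /\
                                         (forall x, f (g x) = x)) /\
  (forall f, Phi f -> (exists x, f x <> x) -> forall n, f n = n -> n = zero) /\
  (forall f, Phi f -> (exists x, f x <> x) ->
     (forall m, exists n, add (opp n) (f n) = m) /\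
     (forall n1 n2, add (opp n1) (f n1) = add (opp n2) (f n2) -> n1 = n2)) /\
  (forall r, R r -> r <> zero) /\
  (forall a, a <> zero -> exists r f, R r /\ Phi f /\ a = f r) /\
  (forall r1 r2 f, R r1 -> R r2 -> Phi f -> f r1 = r2 -> r1 = r2) /\
  (forall r, M r -> R r) /\
  (forall a, mul a zero = zero) /\
  (forall a b r f, R r -> Phi f -> b = f r ->
      (M r -> mul a b = zero) /\ (~ M r -> mul a b = f a)).

Definition centre_Phi (Phi : (N -> N) -> Prop) (z : N -> N) : Prop :=
  Phi z /\ forall f, Phi f -> forall x, f (z x) = z (f x).

End Defs.

From Stdlib Require Import Classical.

(* Right multiplication by any a is either zero or an element of Phi, and
   Phi acts regularly on its orbits (fixed-point-freeness), so an equation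
   [x * a = x * b] at one nonzero x forces a ≅ b, and two elements commuting
   under multiplication, neither a zero multiplier, lie in one Phi-orbit.
   Hence a nonzero element of GC(N) lies in the orbit of every nonzero
   distributive element that is not a zero multiplier; this yields (2) and
   the upper bound in (3).  For (1), the zero multipliers are exactly the y
   with d * y = 0 for a fixed nonzero d in D(N), and distributivity of d
   makes that set an ideal. *)

Set Implicit Arguments.
Unset Strict Implicit.

Section Group.
Variables (N : Type) (add : N -> N -> N) (zero : N) (opp : N -> N).
Hypothesis Hgrp : is_group add zero opp.

Lemma add_idem_eq0 x : add x x = x -> x = zero.
Proof.
  destruct Hgrp as (Hass & H0l & _ & Hinvl & _).
  intros Hx. rewrite <- (H0l x), <- (Hinvl x) at 1.
  rewrite <- Hass, Hx. apply Hinvl.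
Qed.

End Group.

Section PlanarNearring.
Variables (N : Type) (add : N -> N -> N) (zero : N) (opp : N -> N)
          (mul : N -> N -> N) (Phi : (N -> N) -> Prop) (R M : N -> Prop).
Hypothesis Hnr : is_nearring add zero opp mul.
Hypothesis Hpres : is_presentation add zero opp mul Phi R M.

Let distr := distr_elt add mul.
Let zmult := zero_mult zero mul.
Let GC := gen_centre add mul.

Definition in_orbit (a b : N) : Prop := exists f, Phi f /\ f a = b.

Lemma phi_comp f g : Phi f -> Phi g -> Phi (fun x => g (f x)).
Proof. destruct Hpres as (_ & _ & Hcomp & _). apply Hcomp. Qed.

Lemma phi_inverse f : Phi f ->
  exists g, Phi g /\ (forall x, g (f x) = x) /\ (forall x, f (g x) = x).
Proof. destruct Hpres as (_ & _ & _ & Hinv & _). apply Hinv. Qed.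

Lemma mulr0 a : mul a zero = zero.
Proof. destruct Hpres as (_ & _ & _ & _ & _ & _ & _ & _ & _ & _ & H & _). apply H. Qed.

Lemma mul_orbit_nonM y r f : R r -> ~ M r -> Phi f -> mul y (f r) = f y.
Proof.
  destruct Hpres as (_ & _ & _ & _ & _ & _ & _ & _ & _ & _ & _ & Hmul).
  intros Hr HM Hf. exact (proj2 (Hmul y _ r f Hr Hf eq_refl) HM).
Qed.

Lemma phi_zero f : Phi f -> f zero = zero.
Proof.
  destruct Hnr as [Hgrp _]. pose proof Hgrp as (_ & H0l & _).
  intros Hf. apply (add_idem_eq0 Hgrp).
  rewrite <- (proj1 Hpres f Hf). now rewrite H0l.
Qed.

Lemma phi_eq0 f x : Phi f -> f x = zero -> x = zero.
Proof.
  intros Hf Hx. destruct (phi_inverse Hf) as (g & Hg & Hgf & _).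
  rewrite <- (Hgf x), Hx. now apply phi_zero.
Qed.

Lemma in_orbit_sym a b : in_orbit a b -> in_orbit b a.
Proof.
  intros (f & Hf & <-). destruct (phi_inverse Hf) as (g & Hg & Hgf & _).
  now exists g.
Qed.

Lemma in_orbit_trans a b c : in_orbit a b -> in_orbit b c -> in_orbit a c.
Proof.
  intros (f & Hf & <-) (g & Hg & <-). exists (fun x => g (f x)).
  split; [now apply phi_comp | reflexivity].
Qed.

Lemma zero_mult_or_mul_phi a : zmult a \/ exists f, Phi f /\ forall y, mul y a = f y.
Proof.
  destruct Hpres as (_ & _ & _ & _ & _ & _ & _ & Horb & _ & _ & _ & Hmul).
  destruct (classic (a = zero)) as [-> | Ha].
  - left. intros y. apply mulr0.
  - destruct (Horb a Ha) as (r & f & Hr & Hf & Haf).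
    destruct (classic (M r)) as [HM | HM].
    + left. intros y. exact (proj1 (Hmul y a r f Hr Hf Haf) HM).
    + right. exists f. split; [exact Hf |]. intros y.
      exact (proj2 (Hmul y a r f Hr Hf Haf) HM).
Qed.

Lemma mul0l b : mul zero b = zero.
Proof.
  destruct (zero_mult_or_mul_phi b) as [Hb | (f & Hf & Hb)]; rewrite Hb;
    auto using phi_zero.
Qed.

Lemma gen_centre0 : GC zero.
Proof. intros d _. now rewrite mulr0, mul0l. Qed.

(* g^-1 f fixes d <> 0, so it is the identity by fixed-point-freeness. *)
Lemma phi_eq_of_agree f g d : Phi f -> Phi g -> d <> zero -> f d = g d ->
  forall x, f x = g x.
Proof.
  destruct Hpres as (_ & _ & _ & _ & Hfpf & _).
  intros Hf Hg Hd Hfg x. destruct (phi_inverse Hg) as (h & Hh & Hhg & Hgh).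
  destruct (classic (exists x, h (f x) <> x)) as [Hmove | Hfix].
  - exfalso. apply Hd, (Hfpf _ (phi_comp Hf Hh) Hmove). simpl.
    now rewrite Hfg, Hhg.
  - assert (E : h (f x) = x) by (apply NNPP; intro C; apply Hfix; now exists x).
    rewrite <- E at 2. now rewrite Hgh.
Qed.

Lemma nr_equiv_of_mul_eq d a b : d <> zero -> mul d a = mul d b -> nr_equiv mul a b.
Proof.
  intros Hd Hab x.
  destruct (zero_mult_or_mul_phi a) as [Ha | (f & Hf & Ha)];
    destruct (zero_mult_or_mul_phi b) as [Hb | (g & Hg & Hb)];
    rewrite Ha, Hb in *.
  - reflexivity.
  - exfalso. apply Hd, (phi_eq0 Hg). now symmetry.
  - exfalso. exact (Hd (phi_eq0 Hf Hab)).
  - exact (phi_eq_of_agree Hf Hg Hd Hab x).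
Qed.

Lemma zero_mult_of_mul_eq0 d y : d <> zero -> mul d y = zero -> zmult y.
Proof.
  intros Hd Hy x. rewrite (nr_equiv_of_mul_eq Hd (b := zero)).
  - apply mulr0.
  - now rewrite mulr0.
Qed.

Lemma not_zero_mult_of_commute a b : mul a b = mul b a -> b <> zero ->
  ~ zmult a -> ~ zmult b.
Proof.
  intros Hab Hb Ha Hzb.
  destruct (zero_mult_or_mul_phi a) as [| (g & Hg & Hga)]; [contradiction |].
  apply Hb, (phi_eq0 Hg). now rewrite <- Hga, <- Hab.
Qed.

Lemma in_orbit_of_commute a b : mul a b = mul b a -> ~ zmult a -> ~ zmult b ->
  in_orbit a b.
Proof.
  intros Hab Ha Hb.
  destruct (zero_mult_or_mul_phi a) as [| (g & Hg & Hga)]; [contradiction |].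
  destruct (zero_mult_or_mul_phi b) as [| (f & Hf & Hfb)]; [contradiction |].
  rewrite Hga, Hfb in Hab.
  destruct (phi_inverse Hg) as (h & Hh & Hhg & _).
  exists (fun x => h (f x)). split; [now apply phi_comp |].
  now rewrite Hab, Hhg.
Qed.

Lemma gen_centre_in_orbit_distr n d : GC n -> ~ zmult n ->
  distr d -> d <> zero -> in_orbit n d.
Proof.
  intros Hn Hnz Hd Hd0. apply in_orbit_of_commute; auto.
  now apply (not_zero_mult_of_commute (Hn d Hd)).
Qed.

Lemma gen_centre_iff_zero_mult :
  (exists d, distr d /\ d <> zero) -> (forall d, distr d -> zmult d) ->
  forall n, GC n <-> zmult n.
Proof.
  intros (d & Hd & Hd0) HDZ n. split.
  - intros Hn. apply (zero_mult_of_mul_eq0 Hd0). rewrite <- (Hn d Hd). apply HDZ, Hd.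
  - intros Hn d' Hd'. now rewrite (HDZ d' Hd'), Hn.
Qed.

Lemma zero_mult_ideal :
  (exists d, distr d /\ d <> zero) -> is_ideal add zero opp mul zmult.
Proof.
  destruct Hnr as ((_ & _ & H0r & Hinvl & Hinvr) & HmulA & _).
  intros (d & Hd & Hd0).
  assert (Hzm : forall y, mul d y = zero -> zmult y) by
    (intros y; now apply zero_mult_of_mul_eq0).
  repeat split.
  - intros x. apply mulr0.
  - intros i j Hi Hj. apply Hzm. rewrite Hd, Hi, Hj. apply H0r.
  - intros i Hi. apply Hzm.
    assert (E : mul d (add (opp i) i) = zero) by now rewrite Hinvl, mulr0.
    now rewrite Hd, Hi, H0r in E.
  - intros n i Hi. apply Hzm.
    rewrite Hd, Hd, Hi, H0r, <- Hd, Hinvr. apply mulr0.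
  - intros i n Hi x. now rewrite HmulA, Hi, mul0l.
  - intros n m i Hi. apply Hzm.
    assert (E : mul n (add m i) = mul n m).
    { apply (nr_equiv_of_mul_eq Hd0). rewrite Hd, Hi. apply H0r. }
    rewrite E, Hinvr. apply mulr0.
Qed.

Lemma gen_centre_eq0_of_two_orbits :
  (exists d1 d2, distr d1 /\ distr d2 /\ d1 <> zero /\ d2 <> zero /\
     ~ in_orbit d1 d2) ->
  (exists d, distr d /\ ~ zmult d) ->
  forall n, GC n <-> n = zero.
Proof.
  intros (d1 & d2 & Hd1 & Hd2 & Hd10 & Hd20 & Hsep) (d & Hd & Hdz) n.
  split; [| intros ->; exact gen_centre0].
  intros Hn. apply NNPP. intros Hn0.
  assert (Hnz : ~ zmult n)
    by exact (not_zero_mult_of_commute (eq_sym (Hn d Hd)) Hn0 Hdz).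
  apply Hsep, (@in_orbit_trans _ n).
  - now apply in_orbit_sym, gen_centre_in_orbit_distr.
  - now apply gen_centre_in_orbit_distr.
Qed.

Section SingleOrbit.
Variable r : N.
Hypotheses (Hr : R r) (HMr : ~ M r).
Hypothesis Hdistr_orbit : forall d, distr d -> d <> zero -> exists f, Phi f /\ d = f r.

Lemma centre_Phi_gen_centre z : centre_Phi Phi z -> GC (z r).
Proof.
  intros (Hz & Hzc) d Hd. destruct (classic (d = zero)) as [-> | Hd0].
  - now rewrite mulr0, mul0l.
  - destruct (Hdistr_orbit Hd Hd0) as (f & Hf & ->).
    rewrite !mul_orbit_nonM by assumption. apply Hzc, Hf.
Qed.

Lemma gen_centre_in_orbit_rep (n : N) : (exists d, distr d /\ d <> zero) ->
  GC n -> n = zero \/ exists f, Phi f /\ n = f r.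
Proof.
  intros (d & Hd & Hd0) Hn. destruct (classic (n = zero)) as [| Hn0]; [now left | right].
  destruct (Hdistr_orbit Hd Hd0) as (f & Hf & Edf).
  assert (Hdz : ~ zmult d).
  { intros Hz. apply Hd0, (phi_eq0 Hf). rewrite <- (Hz d). rewrite Edf at 3.
    symmetry. apply mul_orbit_nonM; assumption. }
  assert (Hnz : ~ zmult n)
    by exact (not_zero_mult_of_commute (eq_sym (Hn d Hd)) Hn0 Hdz).
  assert (Hrd : in_orbit r d) by (exists f; split; [exact Hf | now symmetry]).
  destruct (in_orbit_trans Hrd (in_orbit_sym (gen_centre_in_orbit_distr Hn Hnz Hd Hd0)))
    as (g & Hg & Eg).
  now exists g.
Qed.

End SingleOrbit.

Lemma gen_centre_of_distr_trivial : (forall d, distr d -> d = zero) -> forall n, GC n.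
Proof. intros HD n d Hd. now rewrite (HD d Hd), mulr0, mul0l. Qed.

End PlanarNearring.

Theorem mainTheorem10 (N : Type) (add : N -> N -> N) (zero : N) (opp : N -> N)
  (mul : N -> N -> N) (Phi : (N -> N) -> Prop) (R M : N -> Prop)
  (Hpl : is_planar add zero opp mul)
  (Hpres : is_presentation add zero opp mul Phi R M) :
  (* (1) *)
  ((exists d, distr_elt add mul d /\ d <> zero) ->
   (forall d, distr_elt add mul d -> zero_mult zero mul d) ->
   (forall n, gen_centre add mul n <-> zero_mult zero mul n) /\
   is_ideal add zero opp mul (zero_mult zero mul)) /\
  (* (2) *)
  ((exists d1 d2, distr_elt add mul d1 /\ distr_elt add mul d2 /\
      d1 <> zero /\ d2 <> zero /\ ~ (exists f, Phi f /\ f d1 = d2)) ->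
   (exists d, distr_elt add mul d /\ ~ zero_mult zero mul d) ->
   forall n, gen_centre add mul n <-> n = zero) /\
  (* (3) *)
  (forall r, R r -> ~ M r ->
   (forall d, distr_elt add mul d -> d <> zero -> exists f, Phi f /\ d = f r) ->
   (exists d, distr_elt add mul d /\ d <> zero) ->
   (gen_centre add mul zero /\
    (forall z, centre_Phi Phi z -> gen_centre add mul (z r))) /\
   (forall n, gen_centre add mul n -> n = zero \/ exists f, Phi f /\ n = f r)) /\
  (* (4) *)
  ((forall d, distr_elt add mul d -> d = zero) -> forall n, gen_centre add mul n).
Proof.
  destruct Hpl as [Hnr _].
  split; [| split; [| split]].
  - intros Hd HDZ. split.
    + exact (gen_centre_iff_zero_mult Hnr Hpres Hd HDZ).
    + exact (zero_mult_ideal Hnr Hpres Hd).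
  - exact (gen_centre_eq0_of_two_orbits Hnr Hpres).
  - intros r Hr HMr Horb Hd. split; [split |].
    + exact (gen_centre0 Hnr Hpres).
    + exact (centre_Phi_gen_centre Hnr Hpres Hr HMr Horb).
    + intros n. exact (gen_centre_in_orbit_rep Hnr Hpres Hr HMr Horb Hd).
  - exact (gen_centre_of_distr_trivial Hnr Hpres).
Qed.
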